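(* The semigroup $Q_3(sl_3(\mathbb{C}))$ of BZ triangles is generated by the eight elements $X, Y, P_{12},P_{23},P_{31},P_{21},P_{32},P_{13}$, where $X$ is the unique element with boundary weights $(\omega_1,\omega_1,\omega_1)$, $Y$ the unique element with boundary weights $(\omega_2,\omega_2,\omega_2)$, and for distinct $i,j\in\{1,2,3\}$, $P_{ij}$ is the unique element whose boundary weight on side $i$ is $\omega_1$, on side $j$ is $\omega_2$, and on the remaining side is $0$. The only relation among them is $X+Y=P_{12}+P_{23}+P_{31}$; that is, $\mathbb{C}[Q_3(sl_3(\mathbb{C}))]\cong\mathbb{C}[x,y,p_{12},p_{23},p_{31},p_{21},p_{32},p_{13}]/(xy-p_{12}p_{23}p_{31})$.
   Context: A Berenstein–Zelevinsky (BZ) triangle for $sl_3(\mathbb{C})$ is a $9$-tuple of nonnegative integers $(a,b,c,d,e,f,g,h,i)$ placed on the vertices of a triangular diagram with rows $a$; $b\ c$; $d\ e$; $f\ g\ h\ i$, so that the sides of the big triangle, oriented counterclockwise, read: side 1 $=(a,b,d,f)$, side 2 $=(f,g,h,i)$, side 3 $=(i,e,c,a)$, and $b,c,e,h,g,d$ (in this cyclic order) form a central hexagon. The entries must satisfy the hexagon conditions $b+c=g+h$, $c+e=d+g$, $e+h=b+d$. The boundary weight of a side read as $(x_1,x_2,x_3,x_4)$ is $(x_1+x_2)\omega_1+(x_3+x_4)\omega_2$, with $\omega_1,\omega_2$ the fundamental weights of $sl_3(\mathbb{C})$. $Q_3(sl_3(\mathbb{C}))$ is the semigroup of BZ triangles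 under entrywise addition. *)

From mathcomp Require Import all_boot.
Set Implicit Arguments. Unset Strict Implicit. Unset Printing Implicit Defensive.

Record tri := Tri { ta : nat; tb : nat; tc : nat; td : nat; te : nat;
                    tf : nat; tg : nat; th : nat; ti : nat }.

Definition is_BZ (t : tri) : Prop :=
  [/\ tb t + tc t = tg t + th t,
      tc t + te t = td t + tg t &
      te t + th t = tb t + td t].

Definition tri_add (s t : tri) : tri :=
  Tri (ta s + ta t) (tb s + tb t) (tc s + tc t) (td s + td t) (te s + te t)
      (tf s + tf t) (tg s + tg t) (th s + th t) (ti s + ti t).
Definition tri0 : tri := Tri 0 0 0 0 0 0 0 0 0.
Definition tri_scale (n : nat) (t : tri) : tri :=
  Tri (n * ta t) (n * tb t) (n * tc t) (n * td t) (n * te t)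
      (n * tf t) (n * tg t) (n * th t) (n * ti t).

(* Boundary weight of side s (s = 1,2,3), as the pair of coefficients
   (of omega_1, of omega_2).  Side 1 = (a,b,d,f), side 2 = (f,g,h,i),
   side 3 = (i,e,c,a); (x1,x2,x3,x4) |-> (x1+x2) w1 + (x3+x4) w2. *)
Definition bw (s : nat) (t : tri) : nat * nat :=
  match s with
  | 1 => (ta t + tb t, td t + tf t)
  | 2 => (tf t + tg t, th t + ti t)
  | _ => (ti t + te t, tc t + ta t)
  end.

(* Generators indexed by 'I_8 in the order
   0:X, 1:Y, 2:P12, 3:P23, 4:P31, 5:P21, 6:P32, 7:P13.
   gen_spec k s = prescribed boundary weight of generator k on side s. *)
Definition w1 : nat * nat := (1, 0).
Definition w2 : nat * nat := (0, 1).
Definition wP (i j s : nat) : nat * nat :=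
  if s == i then w1 else if s == j then w2 else (0, 0).
Definition gen_spec (k : nat) (s : nat) : nat * nat :=
  match k with
  | 0 => w1
  | 1 => w2
  | 2 => wP 1 2 s
  | 3 => wP 2 3 s
  | 4 => wP 3 1 s
  | 5 => wP 2 1 s
  | 6 => wP 3 2 s
  | _ => wP 1 3 s
  end.

Definition has_spec (t : tri) (k : 'I_8) : Prop :=
  forall s, s \in [:: 1; 2; 3] -> bw s t = gen_spec k s.

Definition lincomb (g : 'I_8 -> tri) (c : {ffun 'I_8 -> nat}) : tri :=
  foldr (fun k acc => tri_add (tri_scale (c k) (g k)) acc) tri0 (enum 'I_8).

Definition cadd (c d : {ffun 'I_8 -> nat}) : {ffun 'I_8 -> nat} :=
  [ffun k => c k + d k].
Definition rel_lhs : {ffun 'I_8 -> nat} :=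
  [ffun k : 'I_8 => if (val k == 0) || (val k == 1) then 1 else 0].
Definition rel_rhs : {ffun 'I_8 -> nat} :=
  [ffun k : 'I_8 => if (2 <= val k <= 4) then 1 else 0].

Inductive pcong : {ffun 'I_8 -> nat} -> {ffun 'I_8 -> nat} -> Prop :=
| pcong_base c : pcong (cadd c rel_lhs) (cadd c rel_rhs)
| pcong_refl c : pcong c c
| pcong_sym c d : pcong c d -> pcong d c
| pcong_trans c d e : pcong c d -> pcong d e -> pcong c e.

From mathcomp Require Import all_boot.
From mathcomp Require Import zify.
Set Implicit Arguments. Unset Strict Implicit. Unset Printing Implicit Defensive.

(* The corner entries a, f, i of a BZ triangle are free, and the hexagon
   conditions say exactly that the hexagon entries have the shape
   b = x+p12, e = x+p31, g = x+p23, h = y+p12, c = y+p23, d = y+p31; this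
   is the combination  x X + y Y + sum p_ij P_ij  of the eight generators.
   Such a representation becomes unique once min(p12,p23,p31) = 0, namely
   x = min(b,e,g), and the relation X + Y = P12 + P23 + P31 moves any
   combination into that normal form. *)

Definition bz_gen (k : 'I_8) : tri :=
  nth tri0 [:: Tri 0 1 0 0 1 0 1 0 0; Tri 0 0 1 1 0 0 0 1 0;
               Tri 0 1 0 0 0 0 0 1 0; Tri 0 0 1 0 0 0 1 0 0;
               Tri 0 0 0 1 1 0 0 0 0; Tri 0 0 0 0 0 1 0 0 0;
               Tri 0 0 0 0 0 0 0 0 1; Tri 1 0 0 0 0 0 0 0 0] k.

Lemma bz_gen_BZ k : is_BZ (bz_gen k).
Proof. by case: k => [[|[|[|[|[|[|[|[|k]]]]]]]] ?]. Qed.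

Lemma bz_gen_spec k : has_spec (bz_gen k) k.
Proof.
by move=> s; rewrite !inE => /or3P[]/eqP->; case: k => [[|[|[|[|[|[|[|[|k]]]]]]]] ?].
Qed.

Lemma BZ_spec_uniq k t : is_BZ t -> has_spec t k -> t = bz_gen k.
Proof.
case: t => a b c d e f g h i [/= E1 E2 E3] spec_t.
move: (spec_t 1 erefl) (spec_t 2 erefl) (spec_t 3 erefl).
by case: k {spec_t} => [[|[|[|[|[|[|[|[|k]]]]]]]] ?] //= [? ?] [? ?] [? ?];
  rewrite /bz_gen /=; f_equal; lia.
Qed.

Lemma eq_lincomb g g' c : g =1 g' -> lincomb g c = lincomb g' c.
Proof. by move=> eq_g; rewrite /lincomb; elim: (enum 'I_8) => //= k s ->; rewrite eq_g. Qed.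

Definition coef (x y p12 p23 p31 p21 p32 p13 : nat) : {ffun 'I_8 -> nat} :=
  [ffun k : 'I_8 => nth 0 [:: x; y; p12; p23; p31; p21; p32; p13] k].

Lemma coefE (c : {ffun 'I_8 -> nat}) :
  c = coef (c (inord 0)) (c (inord 1)) (c (inord 2)) (c (inord 3))
           (c (inord 4)) (c (inord 5)) (c (inord 6)) (c (inord 7)).
Proof.
apply/ffunP => k; rewrite ffunE.
by case: k => [[|[|[|[|[|[|[|[|k]]]]]]]] ?] //=; congr (c _); apply: val_inj; rewrite /= inordK.
Qed.

Lemma cadd_coef x y p q r u v w x' y' p' q' r' u' v' w' :
  cadd (coef x y p q r u v w) (coef x' y' p' q' r' u' v' w') =
  coef (x + x') (y + y') (p + p') (q + q') (r + r') (u + u') (v + v') (w + w').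
Proof. by apply/ffunP => k; rewrite !ffunE; case: k => [[|[|[|[|[|[|[|[|k]]]]]]]] ?]. Qed.

Lemma rel_lhsE : rel_lhs = coef 1 1 0 0 0 0 0 0.
Proof. by apply/ffunP => k; rewrite !ffunE; case: k => [[|[|[|[|[|[|[|[|k]]]]]]]] ?]. Qed.

Lemma rel_rhsE : rel_rhs = coef 0 0 1 1 1 0 0 0.
Proof. by apply/ffunP => k; rewrite !ffunE; case: k => [[|[|[|[|[|[|[|[|k]]]]]]]] ?]. Qed.

Lemma enum_ord8 : enum 'I_8 = [seq inord k | k <- iota 0 8].
Proof. by apply: (inj_map val_inj); rewrite val_enum_ord /= !inordK. Qed.

Lemma lincomb_bz_gen x y p12 p23 p31 p21 p32 p13 :
  lincomb bz_gen (coef x y p12 p23 p31 p21 p32 p13) =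
  Tri p13 (x + p12) (y + p23) (y + p31) (x + p31) p21 (x + p23) (y + p12) p32.
Proof.
rewrite /lincomb enum_ord8 /= /bz_gen /coef !ffunE !inordK; [|by [] ..].
by cbv beta iota delta [tri_scale tri_add tri0 nth ta tb tc td te tf tg th ti]; f_equal; lia.
Qed.

Lemma pcong_lincomb c c' : pcong c c' -> lincomb bz_gen c = lincomb bz_gen c'.
Proof.
elim=> // [d | _ _ _ _ -> _ ->] //.
by rewrite [d]coefE rel_lhsE rel_rhsE !cadd_coef !lincomb_bz_gen; f_equal; lia.
Qed.

Lemma pcong_shift n x y p q r u v w :
  pcong (coef x y (p + n) (q + n) (r + n) u v w) (coef (x + n) (y + n) p q r u v w).
Proof.
elim: n x y => [|n IHn] x y; first by rewrite !addn0; apply: pcong_refl.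
apply: (pcong_trans (d := coef x.+1 y.+1 (p + n) (q + n) (r + n) u v w)).
  apply: pcong_sym; move: (pcong_base (coef x y (p + n) (q + n) (r + n) u v w)).
  by rewrite rel_lhsE rel_rhsE !cadd_coef !addn0 !addn1 !addnS.
by rewrite -!addSnnS; apply: IHn.
Qed.

Lemma pcong_coef_normal_form x y p q r u v w : exists x' y' p' q' r',
  pcong (coef x y p q r u v w) (coef x' y' p' q' r' u v w) /\
  [|| p' == 0, q' == 0 | r' == 0].
Proof.
pose m := minn p (minn q r).
have [mp mq mr] : [/\ m <= p, m <= q & m <= r] by rewrite /m; split; lia.
exists (x + m), (y + m), (p - m), (q - m), (r - m); split.
  by have := pcong_shift m x y (p - m) (q - m) (r - m) u v w; rewrite !subnK.
by rewrite !subn_eq0 /m; lia.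
Qed.

Lemma pcong_normal_form c : exists x y p q r u v w,
  pcong c (coef x y p q r u v w) /\ [|| p == 0, q == 0 | r == 0].
Proof.
rewrite [c]coefE; move: (c (inord 0)) (c (inord 1)) (c (inord 2)) (c (inord 3))
  (c (inord 4)) (c (inord 5)) (c (inord 6)) (c (inord 7)) => x y p q r u v w.
have [x' [y' [p' [q' [r' nf]]]]] := pcong_coef_normal_form x y p q r u v w.
by exists x', y', p', q', r', u, v, w.
Qed.

Lemma lincomb_normal_form_inj x y p q r u v w x' y' p' q' r' u' v' w' :
  [|| p == 0, q == 0 | r == 0] -> [|| p' == 0, q' == 0 | r' == 0] ->
  lincomb bz_gen (coef x y p q r u v w) = lincomb bz_gen (coef x' y' p' q' r' u' v' w') ->
  coef x y p q r u v w = coef x' y' p' q' r' u' v' w'.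
Proof. by move=> ? ?; rewrite !lincomb_bz_gen => -[] *; congr coef; lia. Qed.

Lemma BZ_lincomb_bz_gen t : is_BZ t -> exists c, lincomb bz_gen c = t.
Proof.
case: t => a b c d e f g h i [/= E1 E2 E3].
set x := minn b (minn e g).
exists (coef x (c + x - g) (b - x) (g - x) (e - x) f i a).
by rewrite lincomb_bz_gen; f_equal; lia.
Qed.

Theorem mainTheorem4 :
  (forall k : 'I_8, exists t, [/\ is_BZ t, has_spec t k &
      forall t', is_BZ t' -> has_spec t' k -> t' = t]) /\
  (forall g : 'I_8 -> tri, (forall k, is_BZ (g k) /\ has_spec (g k) k) ->
     (forall t, is_BZ t -> exists c, lincomb g c = t) /\
     (forall c c', lincomb g c = lincomb g c' <-> pcong c c')).
Proof.
split=> [k | g gen_g].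
  by exists (bz_gen k); split; [exact: bz_gen_BZ | exact: bz_gen_spec | move=> t; apply: BZ_spec_uniq].
have g_bz_gen : g =1 bz_gen by move=> k; have [] := gen_g k; apply: BZ_spec_uniq.
split=> [t /BZ_lincomb_bz_gen[c <-] | c c'].
  by exists c; rewrite (eq_lincomb _ g_bz_gen).
rewrite !(eq_lincomb _ g_bz_gen); split=> [E | ]; last exact: pcong_lincomb.
have [x [y [p [q [r [u [v [w [c_nf nf]]]]]]]]] := pcong_normal_form c.
have [x' [y' [p' [q' [r' [u' [v' [w' [c'_nf nf']]]]]]]]] := pcong_normal_form c'.
have := pcong_lincomb c'_nf; rewrite -E (pcong_lincomb c_nf).
move=> /(lincomb_normal_form_inj nf nf') nf_eq.
by apply: pcong_trans c_nf _; rewrite nf_eq; apply: pcong_sym.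
Qed.
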